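(* For every integer $k$, there exist a finite field $\mathbb{F}$ and a family $\{\mathcal{I}_j\}$ for which $\mathsf{S}_{\mathrm{L}}(\{\mathcal{I}_j\})>\mathsf{S}(\{\mathcal{I}_j\})+k$.
   Context: Network model: there are $n$ clients $c_1,\dots,c_n$, a positive integer $m$, and sets $\mathcal{I}_1,\dots,\mathcal{I}_n\subseteq[m]$ with $\bigcup_j\mathcal{I}_j=[m]$; write $\{\mathcal{I}_j\}$ for the family. The messages $X_1,\dots,X_m$ are mutually independent, each uniformly distributed on a finite field $\mathbb{F}$ with $|\mathbb{F}|>n$; client $c_j$ initially holds $\{X_i:i\in\mathcal{I}_j\}$; $\underline{X}=(X_1,\dots,X_m)^T$. All clients know all the sets $\mathcal{I}_j$. A protocol with $t$ rounds specifies, for each round $k=1,\dots,t$, a client $c_{i_k}$ that broadcasts (error-free, to everyone) one element of $\mathbb{F}$ which is a deterministic function of the messages held by $c_{i_k}$, of $k$, and of all previously broadcast symbols. $\mathbf{T}(\underline{X})\in\mathbb{F}^t$ is the vector of broadcast symbols; $t$ is the number of transmissions. A protocol is linear (over $\mathbb{F}$) if every broadcast symbol is an $\mathbb{F}$-linear combination of the messages held by the transmitting client, so $\mathbf{T}(\underline{X})=A\underline{X}$ for some $A\in\mathbb{F}^{t\times m}$. A protocol generates a secret key (SK) if there exist functions $\mathsf{k}_1,\dots,\mathsf{k}_n$ such that, with $K=\mathsf{k}_1(\{X_i:i\in\mathcal{I}_1\},\mathbf{T}(\underline{X}))$: (i) $\mathsf{k}_j(\{X_i:i\in\mathcal{I}_j\},\mathbf{T}(\underline{X}))=K$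 with probability 1 for all $j$; (ii) $K$ is uniform on $\mathbb{F}$; (iii) $I(K;\mathbf{T}(\underline{X}))=0$. $\mathsf{S}(\{\mathcal{I}_j\})$ (resp. $\mathsf{S}_{\mathrm{L}}(\{\mathcal{I}_j\})$) is the minimum number of transmissions over all protocols (resp. all linear protocols) that generate a SK, and $\infty$ if there is none. *)

From HB Require Import structures.
From mathcomp Require Import all_boot all_order all_algebra all_field.
Set Implicit Arguments. Unset Strict Implicit. Unset Printing Implicit Defensive.
Import Order.TTheory GRing.Theory Num.Theory.

(* Network: n clients, m messages; client j holds messages indexed by I j. *)
Definition msg (F : finFieldType) (m : nat) := {ffun 'I_m -> F}.

Definition valid_family (n m : nat) (I : 'I_n -> {set 'I_m}) : Prop :=
  \bigcup_(j < n) I j = [set: 'I_m].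

Definition agree_on (F : finFieldType) (m : nat) (A : {set 'I_m}) (x y : msg F m) : Prop :=
  forall i, i \in A -> x i = y i.

(* A protocol: number of rounds, transmitter of round k, and broadcast function of
   round k (a function of all messages and of previously broadcast symbols; locality,
   i.e. dependence only on the transmitter's messages, is required separately). *)
Record protocol (F : finFieldType) (n m : nat) := Protocol {
  nrounds : nat;
  who : nat -> 'I_n;
  bcast : nat -> msg F m -> seq F -> F }.

Fixpoint prefix (F : finFieldType) (n m : nat) (P : protocol F n m) (x : msg F m) (k : nat)
  : seq F :=
  match k with
  | 0 => [::]
  | k'.+1 => rcons (prefix P x k') (bcast P k' x (prefix P x k'))
  end.

Definition transcript (F : finFieldType) (n m : nat) (P : protocol F n m) (x : msg F m)
  : seq F := prefix P x (nrounds P).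

Definition wf_protocol (F : finFieldType) (n m : nat) (I : 'I_n -> {set 'I_m})
  (P : protocol F n m) : Prop :=
  forall k, k < nrounds P ->
    forall (x y : msg F m) (s : seq F), agree_on (I (who P k)) x y ->
      bcast P k x s = bcast P k y s.

Definition linear_protocol (F : finFieldType) (n m : nat) (I : 'I_n -> {set 'I_m})
  (P : protocol F n m) : Prop :=
  exists c : nat -> 'I_m -> F,
    forall k, k < nrounds P ->
      (forall i, i \notin I (who P k) -> c k i = 0%R) /\
      (forall x : msg F m, bcast P k x (prefix P x k) = (\sum_(i < m) c k i * x i)%R).

(* Uniform distribution of K : msg -> F when X is uniform on F^m. *)
Definition uniform_key (F : finFieldType) (m : nat) (K : msg F m -> F) : Prop :=
  forall a : F, #|[set x : msg F m | K x == a]| * #|F| = #|{: msg F m}|.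

(* Independence of K and T (equivalently I(K;T) = 0) under uniform X. *)
Definition indep_key (F : finFieldType) (m : nat) (K : msg F m -> F)
  (T : msg F m -> seq F) : Prop :=
  forall (a : F) (s : seq F),
    #|[set x : msg F m | (K x == a) && (T x == s)]| * #|{: msg F m}| =
    #|[set x : msg F m | K x == a]| * #|[set x : msg F m | T x == s]|.

(* The protocol generates a secret key: each client j computes k_j from its own
   messages and the transcript, all agree (with probability 1, i.e. for all x since
   X has full support) on a common K which is uniform and independent of T. *)
Definition generates_SK (F : finFieldType) (n m : nat) (I : 'I_n -> {set 'I_m})
  (P : protocol F n m) : Prop :=
  exists kf : 'I_n -> msg F m -> seq F -> F,
    (forall j (x y : msg F m) (s : seq F), agree_on (I j) x y -> kf j x s = kf j y s) /\
    exists K : msg F m -> F,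
      (forall j x, kf j x (transcript P x) = K x) /\
      uniform_key K /\ indep_key K (transcript P).

Definition SK_achievable (F : finFieldType) (n m : nat) (I : 'I_n -> {set 'I_m})
  (t : nat) : Prop :=
  exists P : protocol F n m, wf_protocol I P /\ nrounds P = t /\ generates_SK I P.

Definition SKL_achievable (F : finFieldType) (n m : nat) (I : 'I_n -> {set 'I_m})
  (t : nat) : Prop :=
  exists P : protocol F n m,
    wf_protocol I P /\ linear_protocol I P /\ nrounds P = t /\ generates_SK I P.

From Pilot Require Import Defs.
From HB Require Import structures.
From mathcomp Require Import all_boot all_order all_algebra all_field.
From mathcomp Require Import zify ring.
Import Order.TTheory GRing.Theory Num.Theory.
Set Implicit Arguments. Unset Strict Implicit. Unset Printing Implicit Defensive.
Local Open Scope ring_scope.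

(** Take [m = 2T+2] messages, a client holding exactly [x_i] and [x_l] for every pair
    [i != l], clients holding everything, and a finite field [F] of order [p^2] with
    [m <= p]; read each symbol of [F] as a pair [(u, v)] over ['F_p].  The key is
    [(u_0, u_1)], and a client holding all messages broadcasts the deviations of
    [u_2, ..., u_(m-1)] from the ['F_p]-line through [(0, u_0)] and [(1, u_1)], two
    deviations per symbol of [F]: [T] symbols in all.  Any client holding two messages
    recovers that line, and the scheme is secret because key and transcript are
    coordinates of a bijective re-encoding of the messages.  The broadcast is
    ['F_p]-linear but not [F]-linear.

    Conversely, if an [F]-linear transcript of [t <= m - 3] symbols existed, its kernel
    would contain vectors [e_i, e_j, e_l] with [e_a b = (a == b)] on three coordinates.
    Moving from [x] to any [y] with the same transcript along them one at a time, each
    step keeps the transcript and two of the three coordinates, so a client holding just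
    these two computes the same key: the key would be a function of the transcript, which
    a uniform key independent of the transcript cannot be.  So [S_L >= m - 2 = 2T] while
    [S <= T], and [T = |k| + 1] does it. *)

Section LinearForms.
Variables (F : fieldType) (m : nat).
Implicit Types (x y e : {ffun 'I_m -> F}) (c : 'I_m -> F).

Definition lin c x : F := \sum_i c i * x i.

Definition forms t (c : nat -> 'I_m -> F) x : seq F := [seq lin (c k) x | k <- iota 0 t].

Definition translate e (d : F) x : {ffun 'I_m -> F} := [ffun i => x i + d * e i].

Lemma lin_translate c e d x : lin c (translate e d x) = lin c x + d * lin c e.
Proof.
rewrite /lin mulr_sumr -big_split; apply: eq_bigr => i _.
by rewrite ffunE mulrDr mulrCA.
Qed.

Lemma kernel_vectors_on_free_coords t (c : nat -> 'I_m -> F) :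
  exists2 C : {set 'I_m}, (m <= #|C| + t)%N &
  exists e : 'I_m -> {ffun 'I_m -> F}, forall a, a \in C ->
    (forall b, b \in C -> e a b = (a == b)%:R) /\
    forall k, (k < t)%N -> lin (c k) (e a) = 0.
Proof.
pose M : 'M[F]_(m, t) := \matrix_(i, k) c k i.
pose f := maxrankfun M.
exists (~: [set q in codom f]).
  have card_codom_f : #|[set q in codom f]| = \rank M.
    by rewrite cardsE card_codom ?card_ord //; apply: maxrankfun_inj.
  have := cardsC [set q in codom f]; have := rank_leq_col M.
  rewrite card_ord card_codom_f => rank_t card_m.
  by rewrite -[X in (X <= _)%N]card_m addnC leq_add2l.
have /fin_all_exists [mu rowM] : forall a, exists mu : 'rV_(\rank M),
    row a M = mu *m rowsub f M.
  by move=> a; apply/submxP; rewrite eq_maxrowsub row_sub.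
exists (fun a => [ffun q => (q == a)%:R - \sum_r mu a 0 r * (q == f r)%:R]).
move=> a; rewrite !inE => a_free; split=> [b | k kt].
  rewrite !inE => b_free; rewrite ffunE big1 ?subr0 1?eq_sym // => r _.
  by case: eqP b_free => [-> | _ _]; rewrite ?codom_f ?mulr0.
have := congr1 (fun v : 'rV_t => v 0 (Ordinal kt)) (rowM a).
rewrite !mxE /= => Mak.
rewrite /lin; under eq_bigr => q _ do rewrite ffunE mulrBr mulr_sumr.
rewrite sumrB (bigD1 a) //= eqxx mulr1 big1 ?addr0 => [|q /negPf ->]; last first.
  by rewrite mulr0.
rewrite exchange_big Mak; apply/eqP; rewrite subr_eq0; apply/eqP/eq_bigr => r _.
rewrite (bigD1 (f r)) //= eqxx mulr1 big1 ?addr0 => [|q /negPf ->]; last first.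
  by rewrite !mulr0.
by rewrite !mxE mulrC.
Qed.

Lemma translateK e d : cancel (translate e d) (translate e (- d)).
Proof. by move=> x; apply/ffunP => i; rewrite !ffunE mulNr addrK. Qed.

Lemma forms_translate_kernel t (c : nat -> 'I_m -> F) e d x :
  (forall k, (k < t)%N -> lin (c k) e = 0) -> forms t c (translate e d x) = forms t c x.
Proof.
move=> e_ker; apply/eq_in_map => k; rewrite mem_iota => /andP [_ kt].
by rewrite lin_translate e_ker // mulr0 addr0.
Qed.

Lemma pairwise_local_fiber_const (R : Type) t (c : nat -> 'I_m -> F)
    (K : {ffun 'I_m -> F} -> R) :
  (t + 3 <= m)%N ->
  (forall i l, i != l -> forall x y, forms t c x = forms t c y ->
     x i = y i -> x l = y l -> K x = K y) ->
  forall x y, forms t c x = forms t c y -> K x = K y.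
Proof.
move=> tm K_pair x y xy.
have [C Cm [e e_spec]] := kernel_vectors_on_free_coords t c.
have /card_gt2P [i [j [l [[iC jC lC] [ij jl li]]]]] : (2 < #|C|)%N by lia.
have move_forms a d z : a \in C -> forms t c (translate (e a) d z) = forms t c z.
  by move=> aC; apply: forms_translate_kernel; case: (e_spec a aC).
have move_coord a d z q : a \in C -> q \in C ->
    translate (e a) d z q = if a == q then z q + d else z q.
  by move=> aC qC; rewrite ffunE (e_spec a aC).1 //; case: eqP; rewrite ?mulr1 ?mulr0 ?addr0.
pose z1 := translate (e i) (y i - x i) x.
pose z2 := translate (e j) (y j - x j) z1.
pose z3 := translate (e l) (y l - x l) z2.
have [xz1 z1z2 z2z3] : [/\ forms t c x = forms t c z1, forms t c z1 = forms t c z2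
    & forms t c z2 = forms t c z3] by rewrite !move_forms.
have [ji lj il] : [/\ j != i, l != j & i != l] by split; rewrite eq_sym.
have distinct := (negPf ij, negPf ji, negPf jl, negPf lj, negPf li, negPf il).
rewrite (K_pair j l jl x z1) // ?move_coord ?distinct //.
rewrite (K_pair l i li z1 z2) // ?move_coord ?distinct //.
rewrite (K_pair i j ij z2 z3) // ?move_coord ?distinct //.
apply: (K_pair i j ij); first by rewrite -z2z3 -z1z2 -xz1.
  all: by rewrite !move_coord ?eqxx ?distinct ?subrKC.
Qed.
End LinearForms.

Lemma prefix_eq_map (F : finFieldType) n m (P : protocol F n m)
    (h : nat -> msg F m -> F) x t :
  (forall k, (k < t)%N -> bcast P k x (Defs.prefix P x k) = h k x) ->
  Defs.prefix P x t = [seq h k x | k <- iota 0 t].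
Proof.
elim: t => [//|t IHt] P_h; rewrite [LHS]/= P_h // IHt => [|k kt]; last first.
  by apply: P_h; apply: ltnW.
by rewrite -[t.+1]addn1 iotaD map_cat cats1.
Qed.

Lemma indep_key_not_determined (F : finFieldType) m (K : msg F m -> F)
    (T : msg F m -> seq F) :
  uniform_key K -> indep_key K T -> ~ (forall x y, T x = T y -> K x = K y).
Proof.
move=> K_unif KT_indep K_det; pose x0 : msg F m := [ffun => 0].
have joint : [set x | (K x == K x0) && (T x == T x0)] = [set x | T x == T x0].
  apply/setP => x; rewrite !inE.
  by case: (eqVneq (T x) (T x0)) => [/K_det -> | _]; rewrite ?eqxx ?andbF.
have T_fiber_gt0 : (0 < #|[set x | T x == T x0]|)%N.
  by apply/card_gt0P; exists x0; rewrite inE.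
have := KT_indep (K x0) (T x0); rewrite joint mulnC => /eqP.
rewrite eqn_pmul2r // => /eqP K_fiber.
have := K_unif (K x0); rewrite -K_fiber -[RHS]muln1 => /eqP.
rewrite eqn_pmul2l; last by apply/card_gt0P; exists x0.
by move=> /eqP F1; have := card_finNzRing_gt1 F; rewrite F1.
Qed.

Lemma SKL_achievable_lb (F : finFieldType) n m (I : 'I_n -> {set 'I_m}) t :
  (forall i l : 'I_m, i != l -> exists c, I c \subset [set i; l]) ->
  @SKL_achievable F n m I t -> (m <= t + 2)%N.
Proof.
move=> pair_clients [P [_ [[c lin_P] [<- [kf [kf_local [K [kf_K [K_unif KT_indep]]]]]]]]].
have T_forms x : transcript P x = forms (nrounds P) c x.
  apply: (prefix_eq_map (h := fun k => lin (c k))) => k kP.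
  by have [_ ->] := lin_P k kP.
rewrite leqNgt; apply/negP => Pm.
apply: (indep_key_not_determined K_unif KT_indep) => x y; rewrite !T_forms.
apply: pairwise_local_fiber_const => [|i l il x' y' xy' xi xl]; first by lia.
have [j Ij] := pair_clients i l il.
rewrite -(kf_K j x') -(kf_K j y') !T_forms xy'; apply: kf_local => q.
by move/(subsetP Ij); rewrite !inE => /orP [] /eqP ->.
Qed.

Section CoordinateKeys.
Variables (F : finFieldType) (m : nat).
Implicit Types (x y : msg F m) (f : msg F m -> msg F m).

Definition unit_vec (i0 : 'I_m) : msg F m := [ffun i => (i == i0)%:R].

Lemma translate_unit_vec i0 d y i :
  translate (unit_vec i0) d y i = if i == i0 then y i + d else y i.
Proof. by rewrite !ffunE; case: eqP; rewrite ?mulr1 ?mulr0 ?addr0. Qed.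

Lemma card_coord_fiber i0 (S : {set msg F m}) :
  (forall d y, (translate (unit_vec i0) d y \in S) = (y \in S)) ->
  forall a, (#|[set y in S | y i0 == a]| * #|F|)%N = #|S|.
Proof.
move=> S_inv a.
have fiber_card a' : #|[set y in S | y i0 == a']| = #|[set y in S | y i0 == a]|.
  rewrite -(card_preimset _ (can_inj (translateK (unit_vec i0) (a' - a)))).
  apply: eq_card => y; rewrite !inE S_inv translate_unit_vec eqxx.
  congr (_ && _); apply/eqP/eqP => [/(canRL (addrK _)) -> | ->]; by rewrite ?subKr ?subrKC.
have -> : #|S| = \sum_(y in S) 1 by rewrite sum1_card.
rewrite (partition_big (fun y => y i0) predT) //= mulnC -sum_nat_const.
by apply: eq_bigr => a' _; rewrite sum1dep_card fiber_card.
Qed.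

Lemma uniform_key_coord i0 : uniform_key (fun y : msg F m => y i0).
Proof.
move=> a; rewrite -[RHS]cardsT -(@card_coord_fiber i0 setT _ a) => [|d y]; last by rewrite !inE.
by congr (_ * _)%N; apply: eq_card => y; rewrite !inE.
Qed.

Lemma indep_key_coord i0 (Tf : msg F m -> seq F) :
  (forall d y, Tf (translate (unit_vec i0) d y) = Tf y) ->
  indep_key (fun y => y i0) Tf.
Proof.
move=> Tf_inv a s; pose S : {set msg F m} := [set y | Tf y == s].
have S_inv d y : (translate (unit_vec i0) d y \in S) = (y \in S) by rewrite !inE Tf_inv.
have joint : [set y : msg F m | (y i0 == a) && (Tf y == s)] = [set y in S | y i0 == a].
  by apply/setP => y; rewrite !inE andbC.
by rewrite joint -(uniform_key_coord i0 a) mulnCA card_coord_fiber.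
Qed.

Lemma card_set_inj_comp f (P Q : pred (msg F m)) :
  injective f -> (forall x, P x = Q (f x)) -> #|[set x | P x]| = #|[set y | Q y]|.
Proof.
move=> f_inj PQ; rewrite -(card_preimset [set y | Q y] f_inj).
by apply: eq_card => x; rewrite !inE PQ.
Qed.

Lemma uniform_key_inj f (K K' : msg F m -> F) :
  injective f -> (forall x, K x = K' (f x)) -> uniform_key K' -> uniform_key K.
Proof.
move=> f_inj K_f K'_unif a; rewrite -(K'_unif a).
by rewrite (@card_set_inj_comp f _ (fun y => K' y == a) f_inj) // => x; rewrite K_f.
Qed.

Lemma indep_key_inj f (K K' : msg F m -> F) (Tr Tr' : msg F m -> seq F) :
  injective f -> (forall x, K x = K' (f x)) -> (forall x, Tr x = Tr' (f x)) ->
  indep_key K' Tr' -> indep_key K Tr.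
Proof.
move=> f_inj K_f Tr_f KT'_indep a s.
rewrite (card_set_inj_comp (Q := fun y => (K' y == a) && (Tr' y == s)) f_inj); last first.
  by move=> x; rewrite K_f Tr_f.
rewrite (card_set_inj_comp (P := fun x => K x == a) (Q := fun y => K' y == a) f_inj).
  rewrite (card_set_inj_comp (P := fun x => Tr x == s) (Q := fun y => Tr' y == s) f_inj).
    exact: KT'_indep.
  by move=> x; rewrite Tr_f.
by move=> x; rewrite K_f.
Qed.
End CoordinateKeys.

Section PairFamily.
Variable m : nat.

Lemma card_index_pairs : #|{: 'I_m * 'I_m}| = (m * m)%N.
Proof. by rewrite card_prod card_ord. Qed.

Definition client_pair (c : 'I_(m * m)) : 'I_m * 'I_m :=
  enum_val (cast_ord (esym card_index_pairs) c).

Definition pair_client (i l : 'I_m) : 'I_(m * m) :=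
  cast_ord card_index_pairs (enum_rank (i, l)).

Lemma pair_clientK i l : client_pair (pair_client i l) = (i, l).
Proof. by rewrite /client_pair /pair_client cast_ordK enum_rankK. Qed.

Definition pair_family (c : 'I_(m * m)) : {set 'I_m} :=
  let: (i, l) := client_pair c in if i == l then setT else [set i; l].

Lemma pair_family_diag i : pair_family (pair_client i i) = setT.
Proof. by rewrite /pair_family pair_clientK eqxx. Qed.

Lemma pair_family_pair i l : i != l -> pair_family (pair_client i l) = [set i; l].
Proof. by rewrite /pair_family pair_clientK => /negPf ->. Qed.

Lemma valid_pair_family (i : 'I_m) : valid_family pair_family.
Proof.
apply/setP => q; rewrite inE; apply/bigcupP.
by exists (pair_client i i); rewrite ?pair_family_diag ?inE.
Qed.
End PairFamily.

Definition line_through (K : fieldType) (li lj yi yj : K) : K * K :=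
  let d := (yi - yj) / (li - lj) in (yi - li * d, d).

Lemma line_throughE (K : fieldType) (a d li lj : K) :
  li != lj -> line_through li lj (a + li * d) (a + lj * d) = (a, d).
Proof.
move=> lij; rewrite /line_through.
have -> : a + li * d - (a + lj * d) = (li - lj) * d by ring.
by rewrite mulrAC mulfV ?subr_eq0 // mul1r addrK.
Qed.

Lemma natr_Fp_inj p (p_prime : prime p) i j :
  (i < p)%N -> (j < p)%N -> (i%:R : 'F_p) = j%:R -> i = j.
Proof. by move=> ip jp /(congr1 (@nat_of_ord _)); rewrite !val_Fp_nat // !modn_small. Qed.

Lemma agree_onT (F : finFieldType) m (x y : msg F m) : agree_on setT x y -> x = y.
Proof. by move=> xy; apply/ffunP => q; apply: xy; rewrite inE. Qed.

Lemma card_eq_bij (A B : finType) :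
  #|A| = #|B| -> exists (f : A -> B) (g : B -> A), cancel f g /\ cancel g f.
Proof.
move=> AB; exists (fun a => enum_val (cast_ord AB (enum_rank a))).
exists (fun z => enum_val (cast_ord (esym AB) (enum_rank z))).
by split=> ?; rewrite enum_valK ?cast_ordK ?cast_ordKV enum_rankK.
Qed.

Section Construction.
Variables (p : nat) (F : finFieldType) (b : F -> 'F_p * 'F_p) (g : 'F_p * 'F_p -> F).
Hypotheses (gK : cancel g b) (bK : cancel b g).
Variable T : nat.
Local Notation m := T.*2.+2.
Implicit Types (x y : msg F m).

Definition ucoord x i : 'F_p := (b (x (inord i))).1.
Definition vcoord x i : 'F_p := (b (x (inord i))).2.

Definition deviation x i : 'F_p :=
  ucoord x i - (ucoord x 0 + i%:R * (ucoord x 1 - ucoord x 0)).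

Definition sk x : F := g (ucoord x 0, ucoord x 1).

Definition symbol k x : F := g (deviation x k.*2.+2, deviation x k.*2.+3).

Definition dealer : 'I_(m * m) := pair_client ord0 ord0.

Definition sk_protocol : protocol F (m * m) m :=
  Protocol T (fun _ => dealer) (fun k x _ => symbol k x).

Lemma transcript_sk_protocol x :
  transcript sk_protocol x = [seq symbol k x | k <- iota 0 T].
Proof. exact: prefix_eq_map. Qed.

Definition deviation_of (s : seq F) i : 'F_p :=
  if (i < 2)%N then 0 else
  let e := b (nth 0 s (i./2).-1) in if odd i then e.2 else e.1.

Lemma deviation_of_transcript x i :
  (i < m)%N -> deviation_of (transcript sk_protocol x) i = deviation x i.
Proof.
move=> im; rewrite transcript_sk_protocol /deviation_of; case: ltnP => i2.
  by case: i {im} i2 => [|[|]] // _; rewrite /deviation ?mul0r ?mul1r; ring.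
rewrite (nth_map 0%N) ?nth_iota ?size_iota; try lia.
rewrite add0n /symbol gK.
have -> : (i./2).-1.*2.+2 = (i./2).*2 by lia.
by rewrite -[in RHS](odd_double_half i); case: odd; rewrite ?add0n ?add1n.
Qed.

Definition decode (i l : 'I_m) x (s : seq F) : F :=
  let: (a, d) := line_through i%:R l%:R
    (ucoord x i - deviation_of s i) (ucoord x l - deviation_of s l) in
  g (a, a + d).

Hypotheses (p_prime : prime p) (m_le_p : (m <= p)%N).

Lemma decode_transcript (i l : 'I_m) x :
  i != l -> decode i l x (transcript sk_protocol x) = sk x.
Proof.
move=> il; rewrite /decode !deviation_of_transcript //.
have on_line q : ucoord x q - deviation x q =
    ucoord x 0 + q%:R * (ucoord x 1 - ucoord x 0) by rewrite /deviation subKr.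
rewrite !on_line line_throughE ?subrKC //.
apply: contra il => /eqP /(natr_Fp_inj p_prime) il; apply/eqP/val_inj/il.
  exact: leq_trans (ltn_ord i) m_le_p.
exact: leq_trans (ltn_ord l) m_le_p.
Qed.

Definition sk_client_key (c : 'I_(m * m)) x (s : seq F) : F :=
  let: (i, l) := client_pair c in if i == l then sk x else decode i l x s.

Lemma sk_client_key_local c x y s :
  agree_on (pair_family c) x y -> sk_client_key c x s = sk_client_key c y s.
Proof.
rewrite /sk_client_key /pair_family; case: client_pair => i l.
case: eqP => [_ /agree_onT -> // | _ xy].
by rewrite /decode /ucoord !inord_val !xy // !inE eqxx ?orbT.
Qed.

Lemma sk_client_key_transcript c x :
  sk_client_key c x (transcript sk_protocol x) = sk x.
Proof.
rewrite /sk_client_key; case: client_pair => i l.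
by case: eqVneq => // il; apply: decode_transcript.
Qed.

Definition unpack x j : 'F_p :=
  if (j < m)%N then (if (j < 2)%N then ucoord x j else deviation x j)
  else vcoord x (j - m).

Definition pack (z : nat -> 'F_p) : msg F m := [ffun q : 'I_m => g (z q.*2, z q.*2.+1)].

Definition recode x : msg F m := pack (unpack x).

Lemma pack_inj z z' : pack z = pack z' -> forall j, (j < m.*2)%N -> z j = z' j.
Proof.
move=> zz' j jm; have jm' : (j./2 < m)%N by rewrite ltn_half_double.
have /(congr1 b) := congr1 (fun w : msg F m => w (Ordinal jm')) zz'.
rewrite !ffunE !gK /= => -[z1 z2].
by rewrite -(odd_double_half j); case: odd; rewrite ?add0n ?add1n.
Qed.

Lemma unpack_inj x y : (forall j, (j < m.*2)%N -> unpack x j = unpack y j) -> x = y.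
Proof.
move=> xy; have [u0 u1] : ucoord x 0 = ucoord y 0 /\ ucoord x 1 = ucoord y 1.
  by split; [apply: (xy 0%N) | apply: (xy 1%N)].
have u q : (q < m)%N -> ucoord x q = ucoord y q.
  move=> qm; have := xy q; rewrite /unpack qm; case: (ltnP q 2) => _; first by apply; lia.
  by rewrite /deviation u0 u1 => /(_ _)/addIr; apply; lia.
have v q : (q < m)%N -> vcoord x q = vcoord y q.
  move=> qm; have := xy (m + q)%N.
  by rewrite /unpack (ltnNge (m + q) m) leq_addr /= addKn; apply; lia.
apply/ffunP => q; apply: (can_inj bK); have := u q (ltn_ord q); have := v q (ltn_ord q).
rewrite /ucoord /vcoord inord_val.
by case: (b (x q)) => ? ?; case: (b (y q)) => ? ? /= -> ->.
Qed.

Lemma recode_inj : injective recode.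
Proof. by move=> x y /pack_inj; apply: unpack_inj. Qed.

Lemma sk_recode x : sk x = recode x ord0.
Proof. by rewrite /recode /pack ffunE. Qed.

Lemma transcript_recode x :
  transcript sk_protocol x = [seq recode x (inord k.+1) | k <- iota 0 T].
Proof.
rewrite transcript_sk_protocol; apply/eq_in_map => k; rewrite mem_iota => /andP [_ kT].
rewrite /recode /pack ffunE inordK /=; last lia.
by rewrite /unpack !ifT ?ifF //; lia.
Qed.

Lemma sk_protocol_generates_SK : generates_SK (@pair_family m) sk_protocol.
Proof.
exists sk_client_key; split; first by move=> c x y s; apply: sk_client_key_local.
exists sk; split; first by move=> c x; apply: sk_client_key_transcript.
split.
  exact: (uniform_key_inj (K' := fun y => y ord0) recode_inj sk_recode (uniform_key_coord _)).
apply: (indep_key_inj (K' := fun y => y ord0)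
  (Tr' := fun y => [seq y (inord k.+1) | k <- iota 0 T]) recode_inj sk_recode
  transcript_recode).
apply: indep_key_coord => d y; apply/eq_in_map => k; rewrite mem_iota => /andP [_ kT].
by rewrite translate_unit_vec -val_eqE /= inordK //; lia.
Qed.

Lemma SK_achievable_pair_family : @SK_achievable F _ _ (@pair_family m) T.
Proof.
exists sk_protocol; split; last by split; last exact: sk_protocol_generates_SK.
by move=> k _ x y s; rewrite /= pair_family_diag => /agree_onT ->.
Qed.
End Construction.

Theorem theorem4 (k : int) :
  exists (F : finFieldType) (n m : nat) (I : 'I_n -> {set 'I_m}),
    (0 < n)%N /\ (n < #|F|)%N /\ valid_family I /\
    exists t : nat, @SK_achievable F n m I t /\
      forall t' : nat, @SKL_achievable F n m I t' -> (t%:Z + k < t'%:Z)%R.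
Proof.
pose T := (absz k).+1.
have [p m_lt_p p_prime] := prime_above T.*2.+2.
have [F _ card_F] := pPrimePowerField p_prime (isT : (0 < 2)%N).
have [b [g [bK gK]]] : exists (b : F -> 'F_p * 'F_p) g, cancel b g /\ cancel g b.
  by apply: card_eq_bij; rewrite card_prod card_Fp // card_F mulnn.
exists F, (T.*2.+2 * T.*2.+2)%N, T.*2.+2, (@pair_family T.*2.+2).
split; first by rewrite muln_gt0.
split; first by rewrite card_F -mulnn ltn_mul.
split; first exact: valid_pair_family ord0.
exists T; split; first exact: (SK_achievable_pair_family gK bK p_prime (ltnW m_lt_p)).
move=> t' /SKL_achievable_lb t'_lb.
have : (T.*2.+2 <= t' + 2)%N.
  by apply: t'_lb => i l il; exists (pair_client i l); rewrite pair_family_pair.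
rewrite /T; lia.
Qed.
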